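(* Let $K$ be a field (of arbitrary characteristic). Let $\{n_i\mid i\ge1\}$ be a strictly increasing infinite sequence of positive integers such that $n_{i+1}-n_i\ne 1$ for infinitely many $i\ge1$, and let $V$ be the $K$-subspace of $K[x]$ spanned by the monomials $x^{n_i}$ ($i\ge1$). Then the following are equivalent: 1) $\mathfrak{r}(V)=\{0\}$; 2) $V$ is a Mathieu subspace of $K[x]$; 3) there is no integer $d\ge1$ such that $md\in\{n_i\mid i\ge1\}$ for all $m\ge1$.
   Context: For a subset $V$ of $K[x]$, $\mathfrak{r}(V)=\{a\in K[x]\mid a^m\in V\text{ for all } m\gg0\}$. A $K$-subspace $V$ of a commutative $K$-algebra $\mathcal{A}$ is a Mathieu subspace if for all $a,b\in\mathcal{A}$ with $a^m\in V$ for all $m\ge 1$, one has $a^mb\in V$ for all $m\gg 0$. *)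

From HB Require Import structures.
From mathcomp Require Import all_boot all_order all_algebra.
Set Implicit Arguments. Unset Strict Implicit. Unset Printing Implicit Defensive.
Import GRing.Theory.
Local Open Scope ring_scope.

Definition monomial_span (K : fieldType) (n : nat -> nat) : {poly K} -> Prop :=
  fun p => exists (k : nat) (c : nat -> K),
    p = \sum_(i < k) c i *: 'X^(n i).

Definition rad_set (A : comRingType) (V : A -> Prop) : A -> Prop :=
  fun a => exists N : nat, forall m : nat, (N <= m)%N -> V (a ^+ m).

(* Mathieu subspace of a commutative algebra A (V is assumed to be a subspace). *)
Definition mathieu_subspace (A : comRingType) (V : A -> Prop) : Prop :=
  forall a b : A, (forall m : nat, (1 <= m)%N -> V (a ^+ m)) ->
    exists N : nat, forall m : nat, (N <= m)%N -> V (a ^+ m * b).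

From HB Require Import structures.
From mathcomp Require Import all_boot all_order all_algebra.
Set Implicit Arguments. Unset Strict Implicit. Unset Printing Implicit Defensive.
Import GRing.Theory.
Local Open Scope ring_scope.

(* If a <> 0 has all large powers in V, its lowest term a_k x^k survives in
   a^m as a_k^m x^(km), so all large multiples of k are exponents n_i, and
   k > 0 because 0 is not an exponent.  Conversely, if all powers of x^d lie
   in V, the Mathieu property applied to b = 1 + x + ... + x^(d-1) puts every
   large integer among the n_i, which infinitely many gaps forbid.  A zero
   radical makes the Mathieu property trivial. *)

Definition multiples_in (n : nat -> nat) (d : nat) : Prop :=
  forall m, (1 <= m)%N -> exists i, n i = (m * d)%N.

Definition cofinite_range (n : nat -> nat) : Prop :=
  exists N, forall j, (N <= j)%N -> exists i, n i = j.

Lemma mathieu_subspace_rad_set0 (A : comNzRingType) (V : A -> Prop) :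
  V 0 -> (forall a, rad_set V a -> a = 0) -> mathieu_subspace V.
Proof.
move=> V0 rad0 a b aV; have -> : a = 0 by apply: rad0; exists 1%N.
by exists 1%N => -[|m] // _; rewrite expr0n mul0r.
Qed.

Section MonomialSpan.
Variables (K : fieldType) (n : nat -> nat).
Local Notation V := (@monomial_span K n).

Lemma monomial_span0 : V 0.
Proof. by exists 0%N, (fun _ => 0); rewrite big_ord0. Qed.

Lemma monomial_span_Xn i : V 'X^(n i).
Proof.
exists i.+1, (fun j => (j == i)%:R).
rewrite big_ord_recr /= eqxx scale1r big1 ?add0r // => j _.
by rewrite (ltn_eqF (ltn_ord j)) scale0r.
Qed.

Lemma monomial_span_support p j : V p -> p`_j != 0 -> exists i, n i = j.
Proof.
case=> k [c ->]; rewrite coef_sumMXn.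
have [/existsP[i /eqP <-] _|] := boolP [exists i : 'I_k, n i == j].
  by exists (val i).
rewrite negb_exists => /forallP nj; rewrite big1 ?eqxx // => i /andP[_ ij].
by move: (nj i); rewrite ij.
Qed.

Lemma mathieu_monomial_span_cofinite d :
  mathieu_subspace V -> (1 <= d)%N -> multiples_in n d -> cofinite_range n.
Proof.
move=> mathieuV d_gt0 multd.
have XdV m : (1 <= m)%N -> V ('X^d ^+ m).
  by move=> /multd[i ni]; rewrite -exprM mulnC -ni; apply: monomial_span_Xn.
have [N XdbV] := mathieuV _ (\poly_(i < d) 1) XdV.
exists (N * d)%N => j Nd_le_j.
have N_le_jd : (N <= j %/ d)%N by rewrite leq_divRL.
apply: monomial_span_support (XdbV _ N_le_jd) _.
rewrite -exprM coefXnM mulnC ltnNge leq_divM /=.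
by rewrite {1}(divn_eq j d) addKn coef_poly ltn_pmod // oner_neq0.
Qed.

End MonomialSpan.

Lemma coef_exp_lowest_neq0 (R : idomainType) (a : {poly R}) :
  a != 0 -> exists k, forall m, (a ^+ m)`_(k * m) != 0.
Proof.
move=> a_neq0; have [k [b b0_neq0 a_eq]] := multiplicity_XsubC a 0.
rewrite a_neq0 /= rootE horner_coef0 in b0_neq0.
exists k => m; rewrite a_eq polyC0 subr0 exprMn -exprM coefMXn ltnn subnn.
by rewrite -horner_coef0 horner_exp horner_coef0 expf_neq0.
Qed.

Lemma rad_set_monomial_span_multiples (K : fieldType) (n : nat -> nat)
    (a : {poly K}) :
  (forall i, 0 < n i)%N -> a != 0 -> rad_set (monomial_span n) a ->
  exists d, (1 <= d)%N /\ multiples_in n d.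
Proof.
move=> n_gt0 a_neq0 [N aV]; have [k coef_neq0] := coef_exp_lowest_neq0 a_neq0.
have multk m : (N <= m)%N -> exists i, n i = (k * m)%N.
  by move=> Nm; apply: monomial_span_support (aV m Nm) (coef_neq0 m).
have k_gt0 : (0 < k)%N.
  have [i ni] := multk N (leqnn N).
  by move: (n_gt0 i); rewrite ni muln_gt0 => /andP[].
exists (k * N.+1)%N; split=> [|m m_gt0]; first by rewrite muln_gt0 k_gt0.
rewrite mulnCA; apply: multk.
by apply: leq_trans (leqnSn N) _; rewrite leq_pmull.
Qed.

Lemma gaps_not_cofinite (n : nat -> nat) :
  (forall i, n i < n i.+1)%N ->
  (forall N, exists i, (N <= i)%N /\ n i.+1 <> (n i).+1) ->
  ~ cofinite_range n.
Proof.
move=> n_incr gaps [N cofin].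
have n_mono : {mono n : i j / (i <= j)%N}.
  by apply: leq_mono; apply: homo_ltn n_incr => j i k /ltn_trans; apply.
have le_n i : (i <= n i)%N by elim: i => // i /leq_ltn_trans; apply.
have [i [Ni gap_i]] := gaps N.
have [i' ni'] := cofin (n i).+1 (leqW (leq_trans Ni (le_n i))).
have i_lt_i' : (i < i')%N by rewrite -(leqW_mono n_mono) ni'.
apply: gap_i; apply/eqP; rewrite eqn_leq n_incr -ni' andbT.
by rewrite n_mono.
Qed.

Theorem lemma3p4 (K : fieldType) (n : nat -> nat)
  (hpos : (0 < n 0)%N)
  (hinc : forall i : nat, (n i < n i.+1)%N)
  (hgap : forall N : nat, exists i : nat, (N <= i)%N /\ n i.+1 <> (n i).+1) :
  let V := @monomial_span K n in
  ((forall a : {poly K}, rad_set V a -> a = 0) <-> mathieu_subspace V) /\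
  (mathieu_subspace V <->
     ~ (exists d : nat, (1 <= d)%N /\
          forall m : nat, (1 <= m)%N -> exists i : nat, n i = (m * d)%N)).
Proof.
move=> V.
have n_gt0 i : (0 < n i)%N.
  by case: i => [|i] //; apply: leq_ltn_trans (leq0n _) (hinc i).
have rad0_mathieu := @mathieu_subspace_rad_set0 _ V (@monomial_span0 K n).
have no_mult_rad0 : ~ (exists d, (1 <= d)%N /\ multiples_in n d) ->
    forall a, rad_set V a -> a = 0.
  move=> no_mult a aV; apply/eqP; apply: contraT => a_neq0.
  by case: no_mult; apply: rad_set_monomial_span_multiples n_gt0 a_neq0 aV.
have mathieu_no_mult :
    mathieu_subspace V -> ~ (exists d, (1 <= d)%N /\ multiples_in n d).
  move=> mathieuV [d [d_gt0 multd]]; apply: (gaps_not_cofinite hinc hgap).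
  exact: mathieu_monomial_span_cofinite mathieuV d_gt0 multd.
split; first split=> [rad0 | mathieuV].
- exact: rad0_mathieu rad0.
- exact: no_mult_rad0 (mathieu_no_mult mathieuV).
split=> [mathieuV | no_mult].
- exact: mathieu_no_mult mathieuV.
- exact: rad0_mathieu (no_mult_rad0 no_mult).
Qed.
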